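(* Let $n\geq 2$, $\lambda=\frac{n-1}{2}$, and let $$\mathcal K(t)=\sum_{l=1}^\infty\frac{-1}{l(n+l-1)}\cdot\frac{\lambda+l}{\lambda}\,C_l^\lambda(t).$$ For $r\in[0,1)$ and $\vartheta\in[0,\pi]$ let $$p_r(\cos\vartheta)=\frac{1}{\Sigma_n}\cdot\frac{1-r^2}{(1-2r\cos\vartheta+r^2)^{(n+1)/2}}=\frac{1}{\Sigma_n}\sum_{l=0}^\infty r^l\,\frac{\lambda+l}{\lambda}\,C_l^\lambda(\cos\vartheta),$$ where $\Sigma_n=\frac{2\pi^{(n+1)/2}}{\Gamma((n+1)/2)}$. Then, for $\vartheta\in(0,\pi]$, $$\mathcal K(\cos\vartheta)=-\lim_{\epsilon\to0}\int_0^{1-\epsilon}R^{n-2}\int_0^R\frac{\Sigma_n\, p_r(\cos\vartheta)-1}{r}\,dr\,dR.$$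
   Context: $C_l^\lambda$ denotes the Gegenbauer polynomial of degree $l$ and order $\lambda$. $\Sigma_n$ is the surface area of the unit sphere $\mathcal S^n\subseteq\mathbb R^{n+1}$, and $p_r$ is the Poisson kernel on $\mathcal S^n$. *)

From Stdlib Require Import Reals Lra ClassicalEpsilon.
From Coquelicot Require Import Coquelicot.
Open Scope R_scope.

(* Gegenbauer polynomial C_l^lam(t), via the standard three-term recurrence
   C_0 = 1, C_1 = 2 lam t,
   l C_l = 2 t (l + lam - 1) C_{l-1} - (l + 2 lam - 2) C_{l-2}. *)
Fixpoint gegen_pair (lam t : R) (l : nat) : R * R :=
  match l with
  | O => (1, 2 * lam * t)
  | S k =>
      let (a, b) := gegen_pair lam t k in
      (b, (2 * t * (INR k + 2 + lam - 1) * b - (INR k + 2 + 2 * lam - 2) * a)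
            / (INR k + 2))
  end.
Definition gegenbauer (l : nat) (lam t : R) : R := fst (gegen_pair lam t l).

Definition Gamma (x : R) : R :=
  RInt_gen (fun s => Rpower s (x - 1) * exp (- s))
           (at_right 0) (Rbar_locally p_infty).

(* Surface area of the unit sphere S^n in R^(n+1). *)
Definition Sigma (n : nat) : R :=
  2 * Rpower PI ((INR n + 1) / 2) / Gamma ((INR n + 1) / 2).

Definition poisson (n : nat) (r t : R) : R :=
  / Sigma n * ((1 - r ^ 2) / Rpower (1 - 2 * r * t + r ^ 2) ((INR n + 1) / 2)).

Definition lam_of (n : nat) : R := (INR n - 1) / 2.

Definition K_term (n l : nat) (t : R) : R :=
  let lam := lam_of n in
  (-1) / (INR l * (INR n + INR l - 1)) * ((lam + INR l) / lam) * gegenbauer l lam t.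

(* K(t) = sum_{l>=1} K_term n l t, the sum being taken in the Abel sense:
   lim_{rho -> 1^-} sum_{l>=1} rho^l K_term n l t (which agrees with the
   ordinary sum whenever the latter converges, by Abel's theorem). *)
Definition Kfun (n : nat) (t : R) : R :=
  epsilon (inhabits 0)
    (fun L => filterlim (fun rho => Series (fun k => rho ^ (S k) * K_term n (S k) t))
                        (at_left 1) (locally L)).

(* Write q(r) = 1 - 2rt + r^2 with t = cos theta in [-1, 1).  The Gegenbauer
   recurrence is the coefficientwise form of q C' = 2 lam (t - r) C for the
   generating function C(r) = sum_l C_l(t) r^l, so C = q^(-lam) and
   sum_l (lam + l)/lam C_l(t) r^l = (1 - r^2) q^(-lam-1) = Sigma_n p_r(t)
   (Sigma_n > 0 because Gamma is positive).  All these series converge for |r| < 1: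
   for |t| < 1 a positive definite quadratic form in consecutive Gegenbauer values
   grows only polynomially, and at t = -1 the values are explicit.
   Integrating (Sigma_n p_r - 1)/r term by term shows that, for rho < 1,
   Phi(rho) := - int_0^rho R^(n-2) int_0^R (Sigma_n p_r - 1)/r dr dR
   equals rho^(n-1) sum_l rho^l K_l(t), K_l the l-th term of K.  As t < 1 the
   integrand is smooth on a neighbourhood of [0, 1], so Phi is continuous at 1:
   the Abel means of K converge to Phi(1), which is thus K(t), and the limit in
   eps is Phi(1) too. *)

From Stdlib Require Import Reals Lra Lia ClassicalEpsilon.
From Coquelicot Require Import Coquelicot.
Open Scope R_scope.

Lemma gegenbauer_0 lam t : gegenbauer 0 lam t = 1.
Proof. reflexivity. Qed.

Lemma gegenbauer_1 lam t : gegenbauer 1 lam t = 2 * lam * t.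
Proof. reflexivity. Qed.

Lemma gegenbauerSS lam t k :
  gegenbauer (S (S k)) lam t =
  (2 * t * (INR k + 1 + lam) * gegenbauer (S k) lam t
   - (INR k + 2 * lam) * gegenbauer k lam t) / (INR k + 2).
Proof.
  unfold gegenbauer; simpl; destruct (gegen_pair lam t k) as [a b]; simpl.
  f_equal; ring.
Qed.

(** * Growth of the Gegenbauer coefficients *)

Lemma prefix_bounded (v : nat -> R) (N : nat) :
  exists M, forall k, (k <= N)%nat -> v k <= M.
Proof.
  induction N as [|N [M HM]].
  - exists (v O); intros k Hk; replace k with O by lia; lra.
  - exists (Rmax M (v (S N))); intros k Hk.
    destruct (Nat.eq_dec k (S N)) as [->|Hne]; [apply Rmax_r|].
    apply Rle_trans with M; [apply HM; lia | apply Rmax_l].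
Qed.

Lemma bounded_of_eventually_nonincreasing (v : nat -> R) (N : nat) :
  (forall k, (N <= k)%nat -> v (S k) <= v k) -> exists M, forall k, v k <= M.
Proof.
  intros Hdec; destruct (prefix_bounded v N) as [M HM]; exists M; intros k.
  destruct (Nat.le_gt_cases k N) as [Hk|Hk]; [now apply HM|].
  induction k as [|k IH]; [lia|].
  apply Rle_trans with (v k); [apply Hdec; lia|].
  destruct (Nat.eq_dec k N) as [->|Hne]; [apply HM; lia | apply IH; lia].
Qed.

(* A ratio [1 + W/(k+1)] is eventually beaten by any geometric factor [r < 1]. *)
Lemma pow_scaled_bounded (v : nat -> R) (W r : R) :
  (forall k, 0 <= v k) ->
  (forall k, v (S k) <= v k * (1 + W / INR (S k))) ->
  0 <= r < 1 -> exists M, forall k, v k * r ^ k <= M.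
Proof.
  intros Hpos Hratio Hr.
  destruct (INR_archimed 1 (W / (1 - r))) as [N HN]; [lra|].
  rewrite Rmult_1_r in HN.
  apply (bounded_of_eventually_nonincreasing _ N); intros k Hk.
  assert (HNk : INR N <= INR k) by (apply le_INR; exact Hk).
  assert (Hk1 : 0 < INR (S k)) by apply lt_0_INR, Nat.lt_0_succ.
  assert (Hfactor : (1 + W / INR (S k)) * r <= 1).
  { rewrite S_INR in *.
    assert (W < (1 - r) * (INR k + 1)).
    { replace W with (W / (1 - r) * (1 - r)) by (field; lra); nra. }
    apply Rmult_le_reg_r with (INR k + 1); [lra|].
    replace ((1 + W / (INR k + 1)) * r * (INR k + 1)) with ((INR k + 1 + W) * r)
      by (field; lra).
    destruct (Rle_dec 0 W); nra. }
  assert (0 <= v k * r ^ k) by (apply Rmult_le_pos; [apply Hpos | apply pow_le; lra]).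
  simpl pow.
  apply Rle_trans with (v k * (1 + W / INR (S k)) * (r * r ^ k)).
  - apply Rmult_le_compat_r; [apply Rmult_le_pos; [lra | apply pow_le; lra] | apply Hratio].
  - replace (v k * (1 + W / INR (S k)) * (r * r ^ k))
      with (v k * r ^ k * ((1 + W / INR (S k)) * r)) by ring.
    nra.
Qed.

Lemma CV_radius_ge_1 (c : nat -> R) :
  (forall r, 0 < r < 1 -> exists M, forall l, Rabs (c l * r ^ l) <= M) ->
  Rbar_le 1 (CV_radius c).
Proof.
  intros Hbound; destruct (CV_radius_bounded c) as [Hub _].
  pose proof (CV_radius_ge_0 c) as H0.
  destruct (CV_radius c) as [rho| |]; simpl in *; auto.
  destruct (Rle_dec 1 rho) as [|Hlt]; auto.
  specialize (Hub ((rho + 1) / 2) (Hbound ((rho + 1) / 2) ltac:(lra))); simpl in Hub; lra.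
Qed.

Section GegenbauerGrowth.
Variables (lam t : R).
Let c k := gegenbauer k lam t.

(* For |t| < 1 this quadratic form in (c k, c (k+1)) is positive definite; the
   recurrence makes it grow by at most a factor 1 + O(1/k) per step. *)
Definition gegen_quad k := c (S k) ^ 2 - 2 * t * c k * c (S k) + c k ^ 2.

Lemma gegen_quad_S k :
  gegen_quad (S k) = gegen_quad k + (t * c (S k) - c k) ^ 2 *
     ((2 * lam - 2) * (2 * (INR k + 2) + (2 * lam - 2)) / (INR k + 2) ^ 2).
Proof.
  unfold gegen_quad, c; rewrite gegenbauerSS.
  pose proof (pos_INR k); field; lra.
Qed.

Lemma gegen_quad_ge k : -1 < t < 1 ->
  (t * c (S k) - c k) ^ 2 <= gegen_quad k /\ c (S k) ^ 2 * (1 - t ^ 2) <= gegen_quad k.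
Proof.
  intros Ht; unfold gegen_quad.
  pose proof (pow2_ge_0 (c k - t * c (S k))).
  assert (0 <= (1 - t ^ 2) * c (S k) ^ 2) by (apply Rmult_le_pos; [nra | apply pow2_ge_0]).
  split; nra.
Qed.

Lemma gegen_quad_growth k : -1 < t < 1 ->
  gegen_quad (S k) <=
  gegen_quad k * (1 + (2 * Rabs (2 * lam - 2) + (2 * lam - 2) ^ 2) / INR (S k)).
Proof.
  intros Ht; rewrite gegen_quad_S; destruct (gegen_quad_ge k Ht) as [Hu _].
  set (u := (t * c (S k) - c k) ^ 2) in *.
  set (K := 2 * lam - 2); set (m := INR k + 2).
  assert (Hk : 1 <= INR (S k) < m) by (unfold m; rewrite S_INR; pose proof (pos_INR k); lra).
  assert (0 <= u) by apply pow2_ge_0.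
  pose proof (Rle_abs K); pose proof (Rabs_pos K); pose proof (pow2_ge_0 K).
  assert (Hgrowth : K * (2 * m + K) / m ^ 2 <= (2 * Rabs K + K ^ 2) / INR (S k)).
  { apply Rle_trans with ((2 * Rabs K + K ^ 2) / m).
    - apply Rmult_le_reg_r with (m ^ 2); [nra|].
      replace ((2 * Rabs K + K ^ 2) / m * m ^ 2) with ((2 * Rabs K + K ^ 2) * m)
        by (field; lra).
      replace (K * (2 * m + K) / m ^ 2 * m ^ 2) with (K * (2 * m + K)) by (field; lra).
      assert (K * m <= Rabs K * m) by (apply Rmult_le_compat_r; lra).
      assert (K ^ 2 * 1 <= K ^ 2 * m) by (apply Rmult_le_compat_l; lra).
      lra.
    - apply Rmult_le_compat_l; [lra|]; apply Rinv_le_contravar; lra. }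
  assert (0 <= (2 * Rabs K + K ^ 2) / INR (S k)) by (apply Rdiv_le_0_compat; lra).
  nra.
Qed.

Lemma gegenbauer_pow_bounded_interior r : -1 < t < 1 -> 0 < r < 1 ->
  exists M, forall l, Rabs (c l * r ^ l) <= M.
Proof.
  intros Ht Hr.
  destruct (pow_scaled_bounded gegen_quad (2 * Rabs (2 * lam - 2) + (2 * lam - 2) ^ 2)
              (r ^ 2)) as [M HM].
  - intros k; destruct (gegen_quad_ge k Ht) as [H _].
    pose proof (pow2_ge_0 (t * c (S k) - c k)); lra.
  - intros k; now apply gegen_quad_growth.
  - split; [apply pow_le; lra | nra].
  exists (1 + Rabs (M / (1 - t ^ 2))); intros [|k].
  { rewrite Rmult_1_r; unfold c; rewrite gegenbauer_0, Rabs_R1.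
    pose proof (Rabs_pos (M / (1 - t ^ 2))); lra. }
  assert (Hsq : (c (S k) * r ^ S k) ^ 2 <= M / (1 - t ^ 2)).
  { destruct (gegen_quad_ge k Ht) as [_ Hq]; specialize (HM k).
    assert (0 <= (r ^ 2) ^ k) by (apply pow_le; nra).
    apply Rle_trans with (c (S k) ^ 2 * (r ^ 2) ^ k).
    - rewrite Rpow_mult_distr, <- pow_mult, <- (pow_mult r 2 k).
      apply Rmult_le_compat_l; [apply pow2_ge_0|].
      replace (S k * 2)%nat with (2 + 2 * k)%nat by lia; rewrite pow_add.
      assert (0 <= r ^ (2 * k)) by (apply pow_le; lra).
      assert (r ^ 2 <= 1) by nra; nra.
    - apply Rmult_le_reg_r with (1 - t ^ 2); [nra|].
      replace (M / (1 - t ^ 2) * (1 - t ^ 2)) with M by (field; nra).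
      assert (c (S k) ^ 2 * (1 - t ^ 2) * (r ^ 2) ^ k <= gegen_quad k * (r ^ 2) ^ k)
        by (apply Rmult_le_compat_r; lra).
      lra. }
  set (x := c (S k) * r ^ S k) in *; rewrite <- pow2_abs in Hsq.
  pose proof (Rabs_pos x); pose proof (Rle_abs (M / (1 - t ^ 2))); nra.
Qed.
End GegenbauerGrowth.

Fixpoint rising_over_fact (a : R) (k : nat) : R :=
  match k with O => 1 | S k => rising_over_fact a k * (INR k + a) / (INR k + 1) end.

Lemma rising_over_fact_S a k :
  rising_over_fact a (S k) = rising_over_fact a k * (INR k + a) / (INR k + 1).
Proof. reflexivity. Qed.

Lemma rising_over_fact_nonneg a k : 0 <= a -> 0 <= rising_over_fact a k.
Proof.
  intros Ha; induction k as [|k IH]; [simpl; lra|]; rewrite rising_over_fact_S.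
  pose proof (pos_INR k); apply Rdiv_le_0_compat; [apply Rmult_le_pos|]; lra.
Qed.

Lemma gegenbauer_m1 lam k :
  gegenbauer k lam (-1) = (-1) ^ k * rising_over_fact (2 * lam) k.
Proof.
  enough (gegenbauer k lam (-1) = (-1) ^ k * rising_over_fact (2 * lam) k /\
          gegenbauer (S k) lam (-1) = (-1) ^ S k * rising_over_fact (2 * lam) (S k))
    by tauto.
  induction k as [|k [IH1 IH2]].
  - rewrite gegenbauer_0, gegenbauer_1; simpl; split; field.
  - split; [exact IH2|].
    rewrite gegenbauerSS, IH1, IH2, !rising_over_fact_S; simpl pow.
    rewrite S_INR; pose proof (pos_INR k); field; lra.
Qed.

Lemma gegenbauer_pow_bounded_m1 lam r : 0 <= lam -> 0 < r < 1 ->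
  exists M, forall l, Rabs (gegenbauer l lam (-1) * r ^ l) <= M.
Proof.
  intros Hlam Hr.
  destruct (pow_scaled_bounded (rising_over_fact (2 * lam)) (2 * lam - 1) r) as [M HM].
  - intros k; apply rising_over_fact_nonneg; lra.
  - intros k; rewrite rising_over_fact_S, S_INR; pose proof (pos_INR k).
    right; field; lra.
  - lra.
  exists M; intros l; rewrite gegenbauer_m1.
  rewrite !Rabs_mult, pow_1_abs, Rmult_1_l.
  rewrite (Rabs_right (rising_over_fact _ l)) by (apply Rle_ge, rising_over_fact_nonneg; lra).
  rewrite (Rabs_right (r ^ l)) by (apply Rle_ge, pow_le; lra).
  apply HM.
Qed.

Lemma CV_radius_gegenbauer lam t : 0 <= lam -> -1 <= t < 1 ->
  Rbar_le 1 (CV_radius (fun k => gegenbauer k lam t)).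
Proof.
  intros Hlam Ht; apply CV_radius_ge_1; intros r Hr.
  destruct (Req_dec t (-1)) as [->|Hne].
  - now apply gegenbauer_pow_bounded_m1.
  - apply gegenbauer_pow_bounded_interior; auto; lra.
Qed.

Lemma eq_of_is_derive_0 (f : R -> R) (a b : R) :
  (forall x, Rmin a b <= x <= Rmax a b -> is_derive f x 0) -> f b = f a.
Proof.
  intros Hd.
  destruct (MVT_gen f a b (fun _ => 0)) as [x [_ Hx]].
  - intros x Hx; apply Hd; lra.
  - intros x Hx; apply continuity_pt_filterlim.
    apply (ex_derive_continuous (K := R_AbsRing) (V := R_NormedModule)).
    eexists; now apply Hd.
  - lra.
Qed.

(** * The generating function and the Poisson kernel *)

Section GeneratingFunction.
Variables (lam t : R).
Hypothesis lam_pos : 0 < lam.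
Hypothesis t_range : -1 <= t < 1.
Let c k := gegenbauer k lam t.

Lemma gegenbauer_radius r : Rabs r < 1 -> Rbar_lt (Rabs r) (CV_radius c).
Proof.
  intros Hr; eapply Rbar_lt_le_trans; [|apply CV_radius_gegenbauer; auto; lra]; exact Hr.
Qed.

Lemma poisson_denom_pos r : -1 < r -> 0 < (1 - 2 * r * t + r ^ 2).
Proof.
  intros Hr; destruct (Rle_dec 0 r).
  - pose proof (pow2_ge_0 (1 - r)); assert (0 <= r * (1 - t)) by (apply Rmult_le_pos; lra).
    destruct (Req_dec r 0) as [->|]; nra.
  - assert (0 <= - r * (1 + t)) by (apply Rmult_le_pos; lra).
    assert (0 < (1 + r) ^ 2) by (apply pow_lt; lra); nra.
Qed.

(* The Gegenbauer recurrence is the coefficientwise form of the differential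
   equation (1 - 2rt + r^2) C' = 2 lam (t - r) C. *)
Let ode_defect :=
  PS_plus (PS_plus (PS_plus (PS_derive c) (PS_scal (-2 * t) (PS_incr_1 (PS_derive c))))
                   (PS_incr_1 (PS_incr_1 (PS_derive c))))
          (PS_plus (PS_scal (-2 * lam * t) c) (PS_scal (2 * lam) (PS_incr_1 c))).

Lemma ode_defect_0 k : ode_defect k = 0.
Proof.
  unfold ode_defect, PS_plus, PS_scal, PS_incr_1, PS_derive, c.
  destruct k as [|[|k]]; cbn -[INR gegenbauer Rmult Rplus].
  - rewrite gegenbauer_0, gegenbauer_1; simpl; ring.
  - rewrite gegenbauerSS, gegenbauer_0, gegenbauer_1; simpl; field.
  - rewrite (gegenbauerSS lam t (S k)), !S_INR; pose proof (pos_INR k); field; lra.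
Qed.

Lemma gegenbauer_ode r : Rabs r < 1 ->
  (1 - 2 * r * t + r ^ 2) * PSeries (PS_derive c) r = 2 * lam * (t - r) * PSeries c r.
Proof.
  intros Hr; pose proof (gegenbauer_radius r Hr) as Hrad.
  assert (Hd : ex_pseries (PS_derive c) r) by now apply ex_pseries_derive.
  assert (Hc : ex_pseries c r) by now apply CV_radius_inside.
  assert (Hscal : forall k (a : nat -> R), ex_pseries a r -> ex_pseries (PS_scal k a) r)
    by (intros k a Ha; apply ex_pseries_scal; [apply Rmult_comm | exact Ha]).
  assert (E : PSeries ode_defect r = 0)
    by (rewrite (PSeries_ext _ (fun _ => 0) r ode_defect_0); apply PSeries_const_0).
  assert (Hd1 : ex_pseries (PS_incr_1 (PS_derive c)) r) by now apply ex_pseries_incr_1.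
  assert (Hd2 : ex_pseries (PS_incr_1 (PS_incr_1 (PS_derive c))) r)
    by now apply ex_pseries_incr_1.
  assert (Hc1 : ex_pseries (PS_incr_1 c) r) by now apply ex_pseries_incr_1.
  unfold ode_defect in E.
  rewrite PSeries_plus in E.
  2: { apply ex_pseries_plus; [apply ex_pseries_plus; [exact Hd | apply Hscal, Hd1] | exact Hd2]. }
  2: { apply ex_pseries_plus; apply Hscal; assumption. }
  rewrite PSeries_plus in E; [| apply ex_pseries_plus; [exact Hd | apply Hscal, Hd1] | exact Hd2].
  rewrite PSeries_plus in E; [| exact Hd | apply Hscal, Hd1].
  rewrite PSeries_plus in E; [| apply Hscal, Hc | apply Hscal, Hc1].
  rewrite !PSeries_scal, !PSeries_incr_1 in E.
  set (X := PSeries (PS_derive c) r) in *; set (Y := PSeries c r) in *; clearbody X Y.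
  apply Rminus_diag_uniq; rewrite <- E; ring.
Qed.

Lemma gegenbauer_generating_function r : Rabs r < 1 ->
  PSeries c r * Rpower (1 - 2 * r * t + r ^ 2) lam = 1.
Proof.
  intros Hr.
  set (h := fun x => PSeries c x * Rpower (1 - 2 * x * t + x ^ 2) lam).
  change (h r = 1); replace 1 with (h 0).
  2: { unfold h; rewrite PSeries_0; unfold c; rewrite gegenbauer_0.
       replace (1 - 2 * 0 * t + 0 ^ 2) with 1 by ring.
       unfold Rpower; rewrite ln_1, Rmult_0_r, exp_0; ring. }
  apply eq_of_is_derive_0; intros x Hx.
  assert (Hx1 : Rabs x < 1).
  { apply Rabs_def2 in Hr; apply Rabs_def1; unfold Rmin, Rmax in Hx;
      destruct (Rle_dec 0 r); lra. }
  pose proof (poisson_denom_pos x (proj2 (Rabs_def2 _ _ Hx1))) as Hq.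
  pose proof (gegenbauer_radius x Hx1) as Hrad.
  pose proof (gegenbauer_ode x Hx1) as Hode.
  unfold h, Rpower in *; auto_derive.
  - repeat split; [now apply ex_derive_PSeries | lra].
  - rewrite Derive_PSeries by exact Hrad.
    set (E := exp (lam * ln (1 - 2 * x * t + x ^ 2))).
    set (X := PSeries (PS_derive c) x) in *; set (Y := PSeries c x) in *.
    replace (1 + - (2 * x * t) + x * (x * 1)) with (1 - 2 * x * t + x ^ 2) by ring.
    replace X with (2 * lam * (t - x) * Y / (1 - 2 * x * t + x ^ 2))
      by (rewrite <- Hode; field; lra).
    field; lra.
Qed.

Definition poisson_coef k := (lam + INR k) / lam * c k.

Lemma poisson_coef_eq k :
  poisson_coef k = PS_plus c (PS_scal (/ lam) (PS_incr_1 (PS_derive c))) k.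
Proof.
  unfold poisson_coef, PS_plus, PS_scal, PS_incr_1, PS_derive.
  destruct k as [|k]; cbn -[INR gegenbauer Rmult Rplus Rinv]; [simpl|]; field; lra.
Qed.

Lemma CV_radius_poisson_coef : Rbar_le 1 (CV_radius poisson_coef).
Proof.
  rewrite (CV_radius_ext _ _ poisson_coef_eq).
  eapply Rbar_le_trans; [|apply CV_radius_plus].
  rewrite CV_radius_scal, CV_radius_incr_1, CV_radius_derive by (apply Rinv_neq_0_compat; lra).
  pose proof (CV_radius_gegenbauer lam t (Rlt_le _ _ lam_pos) t_range) as H; fold c in H.
  unfold Rbar_min; destruct (CV_radius c); simpl in *; auto; rewrite Rmin_left; lra.
Qed.

Lemma poisson_series r : Rabs r < 1 ->
  PSeries poisson_coef r = (1 - r ^ 2) / Rpower (1 - 2 * r * t + r ^ 2) (lam + 1).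
Proof.
  intros Hr; pose proof (gegenbauer_radius r Hr) as Hrad.
  rewrite (PSeries_ext _ _ _ poisson_coef_eq), PSeries_plus, PSeries_scal, PSeries_incr_1.
  2: now apply CV_radius_inside.
  2: { apply ex_pseries_scal; [apply Rmult_comm|].
       now apply ex_pseries_incr_1, ex_pseries_derive. }
  pose proof (gegenbauer_ode r Hr) as Hode.
  pose proof (gegenbauer_generating_function r Hr) as Hgen.
  pose proof (poisson_denom_pos r (proj2 (Rabs_def2 _ _ Hr))) as Hq.
  rewrite Rpower_plus, Rpower_1 by exact Hq.
  pose proof (exp_pos (lam * ln (1 - 2 * r * t + r ^ 2))) as HE.
  fold (Rpower (1 - 2 * r * t + r ^ 2) lam) in HE.
  set (E := Rpower (1 - 2 * r * t + r ^ 2) lam) in *.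
  set (X := PSeries (PS_derive c) r) in *; set (Y := PSeries c r) in *.
  assert (HY : Y = / E) by (rewrite <- (Rmult_1_l (/ E)), <- Hgen; field; lra).
  assert (HX : X = 2 * lam * (t - r) * Y / (1 - 2 * r * t + r ^ 2))
    by (rewrite <- Hode; field; lra).
  rewrite HX, HY; field; lra.
Qed.

Lemma poisson_quot_series r : 0 < r < 1 ->
  PSeries (PS_decr_1 poisson_coef) r =
  ((1 - r ^ 2) / Rpower (1 - 2 * r * t + r ^ 2) (lam + 1) - 1) / r.
Proof.
  intros Hr; assert (Hr1 : Rabs r < 1) by (rewrite Rabs_right; lra).
  rewrite <- poisson_series by exact Hr1.
  rewrite (PSeries_decr_1 poisson_coef r).
  2: { apply CV_radius_inside.
       eapply Rbar_lt_le_trans; [|apply CV_radius_poisson_coef]; exact Hr1. }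
  unfold poisson_coef, c; rewrite gegenbauer_0; simpl INR; field; lra.
Qed.
End GeneratingFunction.

(** * Positivity of the Gamma function *)

Lemma eventually_within_pos (P : R -> Prop) : (forall x, 0 < x -> P x) ->
  filter_prod (at_right 0) (Rbar_locally p_infty)
    (fun ab => forall x, Rmin (fst ab) (snd ab) <= x <= Rmax (fst ab) (snd ab) -> P x).
Proof.
  intros HP; apply Filter_prod with (Q := fun a => 0 < a) (R := fun b => 0 < b).
  - exists (mkposreal 1 Rlt_0_1); intros; assumption.
  - exists 0; intros; assumption.
  - intros a b Ha Hb x Hx; apply HP; simpl in Hx; unfold Rmin in Hx.
    destruct (Rle_dec a b); lra.
Qed.

Section PositiveImproperIntegral.
Variables (f : R -> R) (B C a : R).
Hypothesis f_cont : forall s, 0 < s -> continuous f s.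
Hypothesis f_pos : forall s, 0 < s -> 0 < f s.
Hypothesis f_bounded : forall s, 0 < s <= 1 -> f s <= B.
Hypothesis a_pos : 0 < a.
Hypothesis f_decay : forall s, 1 <= s -> f s <= C * exp (- a * s).

Let F s := RInt f 1 s.

Lemma ex_RInt_pos u v : 0 < u -> 0 < v -> ex_RInt f u v.
Proof.
  intros Hu Hv; apply (ex_RInt_continuous (V := R_CompleteNormedModule)).
  intros z Hz; apply f_cont; unfold Rmin, Rmax in Hz; destruct (Rle_dec u v); lra.
Qed.

Lemma RInt_pos_nonneg u v : 0 < u <= v -> 0 <= RInt f u v.
Proof.
  intros Huv; apply RInt_ge_0; [lra | apply ex_RInt_pos; lra |].
  intros x Hx; apply Rlt_le, f_pos; lra.
Qed.

Lemma F_sub u v : 0 < u -> 0 < v -> F v - F u = RInt f u v.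
Proof.
  intros Hu Hv; unfold F; rewrite <- (RInt_Chasles f 1 u v) by (apply ex_RInt_pos; lra).
  change (plus ?x ?y) with (x + y); ring.
Qed.

Lemma F_cauchy_on (P : R -> Prop) (eps : R) :
  (forall u, P u -> 0 < u) -> (forall u v, P u -> P v -> u <= v -> RInt f u v < eps) ->
  forall u v, P u -> P v -> Rabs (F v - F u) < eps.
Proof.
  intros HP Hsmall u v Hu Hv; pose proof (HP u Hu); pose proof (HP v Hv).
  destruct (Rle_dec u v) as [Huv|Hvu].
  - rewrite F_sub, Rabs_right by (try apply Rle_ge, RInt_pos_nonneg; lra); auto.
  - rewrite Rabs_minus_sym, F_sub, Rabs_right by (try apply Rle_ge, RInt_pos_nonneg; lra).
    apply Hsmall; auto; lra.
Qed.

Lemma RInt_near_0_le u v : 0 < u <= v -> v <= 1 -> RInt f u v <= B * (v - u).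
Proof.
  intros Huv Hv; replace (B * (v - u)) with (RInt (fun _ => B) u v)
    by (rewrite RInt_const; apply Rmult_comm).
  apply RInt_le; [lra | apply ex_RInt_pos; lra | apply ex_RInt_const |].
  intros x Hx; apply f_bounded; lra.
Qed.

Lemma RInt_tail_le u v : 1 <= u <= v -> RInt f u v <= C / a * exp (- a * u).
Proof.
  intros Huv.
  assert (Hprim : is_RInt (fun s => C * exp (- a * s)) u v
                    (- C / a * exp (- a * v) - - C / a * exp (- a * u))).
  { apply (is_RInt_derive (V := R_CompleteNormedModule) (fun s => - C / a * exp (- a * s))).
    - intros x _; auto_derive; [auto | field; lra].
    - intros x _; apply (ex_derive_continuous (K := R_AbsRing) (V := R_NormedModule)).
      auto_derive; auto. }
  assert (0 <= C) by (pose proof (f_decay 1 (Rle_refl 1)); pose proof (f_pos 1 Rlt_0_1);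
                      pose proof (exp_pos (- a * 1)); nra).
  apply Rle_trans with (- C / a * exp (- a * v) - - C / a * exp (- a * u)).
  - rewrite <- (is_RInt_unique _ _ _ _ Hprim).
    apply RInt_le; [lra | apply ex_RInt_pos; lra | eexists; exact Hprim |].
    intros x Hx; apply f_decay; lra.
  - pose proof (exp_pos (- a * v)); assert (0 <= C / a) by (apply Rdiv_le_0_compat; lra).
    replace (- C / a) with (- (C / a)) by (field; lra); nra.
Qed.

Lemma F_lim_at_0 : exists L, filterlim F (at_right 0) (locally L).
Proof.
  apply (filterlim_locally_cauchy (U := R_CompleteSpace)); intros [eps Heps]; simpl.
  set (d := Rmin 1 (eps / (Rabs B + 1))).
  assert (Hd : 0 < d)
    by (apply Rmin_glb_lt; [lra | apply Rdiv_lt_0_compat; pose proof (Rabs_pos B); lra]).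
  exists (fun u => 0 < u < d); split.
  - exists (mkposreal d Hd); intros y Hy Hy0; change (Rabs (y - 0) < d) in Hy.
    apply Rabs_def2 in Hy; lra.
  - apply F_cauchy_on; [intros u Hu; lra|]; intros u v Hu Hv Huv.
    assert (Hd1 : d <= 1) by apply Rmin_l.
    assert (Hd2 : d * (Rabs B + 1) <= eps).
    { apply Rle_trans with (eps / (Rabs B + 1) * (Rabs B + 1)).
      - apply Rmult_le_compat_r; [pose proof (Rabs_pos B); lra | apply Rmin_r].
      - right; field; pose proof (Rabs_pos B); lra. }
    eapply Rle_lt_trans; [apply RInt_near_0_le; lra|].
    pose proof (Rle_abs B); pose proof (Rabs_pos B); nra.
Qed.

Lemma F_lim_at_infty : exists L, filterlim F (Rbar_locally p_infty) (locally L).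
Proof.
  apply (filterlim_locally_cauchy (U := R_CompleteSpace)); intros [eps Heps]; simpl.
  set (M := Rmax 1 (C / (a * a * eps))).
  assert (HM1 : 1 <= M) by apply Rmax_l; assert (HM2 : C / (a * a * eps) <= M) by apply Rmax_r.
  exists (fun u => M < u); split; [now exists M|].
  apply F_cauchy_on; [intros u Hu; lra|]; intros u v Hu Hv Huv.
  eapply Rle_lt_trans; [apply RInt_tail_le; lra|].
  (* exp (a u) >= 1 + a u turns the exponential tail into a 1/u tail. *)
  pose proof (exp_ineq1_le (a * u)) as Hexp.
  replace (exp (- a * u)) with (/ exp (a * u)) by (rewrite <- exp_Ropp; f_equal; ring).
  assert (Hau : C / (a * a * eps) < u) by lra.
  assert (0 < a * a * eps) by (apply Rmult_lt_0_compat; nra).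
  apply (Rmult_lt_compat_r (a * a * eps)) in Hau; [|lra].
  replace (C / (a * a * eps) * (a * a * eps)) with C in Hau by (field; nra).
  pose proof (exp_pos (a * u)).
  apply Rmult_lt_reg_r with (a * exp (a * u)); [nra|].
  replace (C / a * / exp (a * u) * (a * exp (a * u))) with C by (field; nra).
  nra.
Qed.

Lemma F_derive x : 0 < x -> is_derive F x (f x).
Proof.
  intros Hx; apply is_derive_RInt with (a := 1); [|now apply f_cont].
  generalize (open_gt 0 x Hx); apply filter_imp; intros y Hy.
  apply RInt_correct, ex_RInt_pos; lra.
Qed.

Lemma RInt_gen_pos : 0 < RInt_gen f (at_right 0) (Rbar_locally p_infty).
Proof.
  destruct F_lim_at_0 as [L0 HL0]; destruct F_lim_at_infty as [Loo HLoo].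
  assert (HI : is_RInt_gen f (at_right 0) (Rbar_locally p_infty) (Loo - L0)).
  { apply is_RInt_gen_ext with (f := Derive F).
    - generalize (eventually_within_pos _ (fun x Hx => is_derive_unique _ _ _ (F_derive x Hx))).
      apply filter_imp; intros ab H x Hx; apply H; lra.
    - apply is_RInt_gen_Derive; auto.
      + apply eventually_within_pos; intros x Hx; eexists; now apply F_derive.
      + apply eventually_within_pos; intros x Hx.
        apply continuous_ext_loc with f; [|now apply f_cont].
        generalize (open_gt 0 x Hx); apply filter_imp; intros y Hy.
        symmetry; apply is_derive_unique, F_derive, Hy. }
  rewrite (is_RInt_gen_unique _ _ HI).
  assert (HL0_le : Rbar_le L0 (F 1)).
  { apply (filterlim_le (F := at_right 0) F (fun _ => F 1)); [| exact HL0 | apply filterlim_const].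
    exists (mkposreal 1 Rlt_0_1); intros y Hy Hy0; change (Rabs (y - 0) < 1) in Hy.
    apply Rabs_def2 in Hy; pose proof (F_sub y 1 Hy0 Rlt_0_1).
    pose proof (RInt_pos_nonneg y 1); lra. }
  assert (HLoo_ge : Rbar_le (F 2) Loo).
  { apply (filterlim_le (F := Rbar_locally p_infty) (fun _ => F 2) F);
      [| apply filterlim_const | exact HLoo].
    exists 2; intros b Hb; pose proof (F_sub 2 b); pose proof (RInt_pos_nonneg 2 b); lra. }
  assert (H12 : 0 < RInt f 1 2).
  { apply RInt_gt_0; [lra | intros; apply f_pos; lra | intros; apply f_cont; lra]. }
  pose proof (F_sub 1 2 Rlt_0_1); simpl in HL0_le, HLoo_ge; lra.
Qed.
End PositiveImproperIntegral.

Lemma exp_le_compat x y : x <= y -> exp x <= exp y.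
Proof. intros [H| ->]; [now apply Rlt_le, exp_increasing | apply Rle_refl]. Qed.

Lemma ln_le_sub1 y : 0 < y -> ln y <= y - 1.
Proof. intros Hy; pose proof (exp_ineq1_le (ln y)); rewrite exp_ln in H by exact Hy; lra. Qed.

Lemma Gamma_pos x : 1 < x -> 0 < Gamma x.
Proof.
  intros Hx; unfold Gamma; set (k := x - 1); assert (Hk : 0 < k) by (unfold k; lra).
  apply (RInt_gen_pos _ 1 (exp (k * (ln (2 * k) - 1))) (1 / 2)); try lra.
  - intros s Hs; apply (ex_derive_continuous (K := R_AbsRing) (V := R_NormedModule)).
    unfold Rpower; auto_derive; auto.
  - intros s Hs; apply Rmult_lt_0_compat; apply exp_pos.
  - intros s Hs; cbv beta; unfold Rpower.
    assert (ln s <= 0) by (rewrite <- ln_1; apply ln_le; lra).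
    assert (exp (k * ln s) <= 1) by (rewrite <- exp_0; apply exp_le_compat; nra).
    assert (exp (- s) <= 1) by (rewrite <- exp_0; apply exp_le_compat; lra).
    pose proof (exp_pos (k * ln s)); pose proof (exp_pos (- s)); nra.
  - (* ln y <= y - 1 at y = s / (2k) bounds s^k e^(-s/2) by its maximum. *)
    intros s Hs; cbv beta; unfold Rpower; rewrite <- !exp_plus; apply exp_le_compat.
    pose proof (ln_le_sub1 (s / (2 * k))); rewrite ln_div in H by lra.
    assert (k * (ln s - ln (2 * k)) <= k * (s / (2 * k) - 1))
      by (apply Rmult_le_compat_l; [lra | apply H; apply Rdiv_lt_0_compat; lra]).
    replace (k * (s / (2 * k) - 1)) with (s / 2 - k) in H0 by (field; lra).
    lra.
Qed.

Lemma Sigma_pos n : (2 <= n)%nat -> 0 < Sigma n.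
Proof.
  intros hn; apply le_INR in hn; simpl INR in hn; unfold Sigma.
  apply Rdiv_lt_0_compat; [unfold Rpower; pose proof (exp_pos ((INR n + 1) / 2 * ln PI)); lra|].
  apply Gamma_pos; lra.
Qed.

(** * Term-by-term integration and the Abel limit *)

Lemma CV_radius_incr_n (a : nat -> R) m : CV_radius (PS_incr_n a m) = CV_radius a.
Proof.
  induction m as [|m IH]; [reflexivity|].
  change (PS_incr_n a (S m)) with (PS_incr_1 (PS_incr_n a m)).
  now rewrite CV_radius_incr_1.
Qed.

Lemma CV_radius_div_succ (a : nat -> R) : CV_radius (fun k => a k / INR (S k)) = CV_radius a.
Proof.
  transitivity (CV_radius (PS_decr_1 (PS_Int a))).
  - apply CV_radius_ext; intros k; reflexivity.
  - now rewrite CV_radius_decr_1, CV_radius_Int.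
Qed.

Lemma RInt_pow_mul_PSeries (a : nat -> R) (m : nat) (x : R) :
  Rbar_lt (Rabs x) (CV_radius a) ->
  RInt (fun y => y ^ m * PSeries a y) 0 x =
  x ^ S m * PSeries (fun k => a k / INR (S (m + k))) x.
Proof.
  intros Hx.
  rewrite (RInt_ext _ (PSeries (PS_incr_n a m))) by (intros; symmetry; apply PSeries_incr_n).
  rewrite RInt_PSeries by (rewrite CV_radius_incr_n; exact Hx).
  rewrite (PSeries_decr_n_aux _ (S m)).
  - f_equal; apply PSeries_ext; intros k; unfold PS_decr_n, PS_Int; simpl.
    rewrite PS_incr_n_simplify; destruct (Compare_dec.le_lt_dec m (m + k)); [|lia].
    now replace (m + k - m)%nat with k by lia.
  - intros [|k] Hk; [reflexivity|]; unfold PS_Int; rewrite PS_incr_n_simplify.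
    destruct (Compare_dec.le_lt_dec m k); [lia|]; apply Rmult_0_l.
Qed.

Lemma Kfun_abel n t L :
  filterlim (fun rho => Series (fun k => rho ^ S k * K_term n (S k) t)) (at_left 1) (locally L) ->
  Kfun n t = L.
Proof.
  intros HL; unfold Kfun.
  apply (filterlim_locally_unique (F := at_left 1)
           (fun rho => Series (fun k => rho ^ S k * K_term n (S k) t))); [|exact HL].
  apply (epsilon_spec (inhabits 0)
           (fun L => filterlim (fun rho => Series (fun k => rho ^ S k * K_term n (S k) t))
                       (at_left 1) (locally L))).
  now exists L.
Qed.

Section PoissonIntegral.
Variables (n : nat) (t : R).
Hypothesis n_ge_2 : (2 <= n)%nat.
Hypothesis t_range : -1 <= t < 1.
Let lam := lam_of n.
Let e := PS_decr_1 (poisson_coef lam t).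

Lemma INR_n_ge_2 : 2 <= INR n.
Proof. exact (le_INR 2 n n_ge_2). Qed.

Lemma lam_of_pos : 0 < lam.
Proof. unfold lam, lam_of; pose proof INR_n_ge_2; lra. Qed.

Lemma e_radius x : Rabs x < 1 -> Rbar_lt (Rabs x) (CV_radius e).
Proof.
  intros Hx; unfold e; rewrite CV_radius_decr_1.
  eapply Rbar_lt_le_trans; [|apply (CV_radius_poisson_coef lam t lam_of_pos t_range)]; exact Hx.
Qed.

Let quot r := (Sigma n * poisson n r t - 1) / r.

Lemma quot_series r : 0 < r < 1 -> quot r = PSeries e r.
Proof.
  intros Hr; unfold e; rewrite (poisson_quot_series lam t lam_of_pos t_range r Hr).
  unfold quot, poisson; pose proof (Sigma_pos n n_ge_2).
  rewrite <- Rmult_assoc, Rinv_r, Rmult_1_l by lra.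
  now replace ((INR n + 1) / 2) with (lam + 1) by (unfold lam, lam_of; field).
Qed.

(* At [r = 0] the quotient is the junk value 0/0 = 0; the series gives its
   continuous extension, which keeps the integrals below differentiable in
   their upper limit on a neighbourhood of [0, 1]. *)
Definition quot_ext r := if Rle_dec r 0 then PSeries e r else quot r.

Lemma quot_ext_cont x : -1 < x -> continuous quot_ext x.
Proof.
  intros Hx; destruct (Rlt_dec 0 x) as [Hpos|Hnpos].
  - apply continuous_ext_loc with quot.
    + generalize (open_gt 0 x Hpos); apply filter_imp; intros y Hy.
      unfold quot_ext; destruct (Rle_dec y 0); [lra | reflexivity].
    + apply (ex_derive_continuous (K := R_AbsRing) (V := R_NormedModule)).
      pose proof (poisson_denom_pos t t_range x ltac:(lra)).
      unfold quot, poisson, Rpower; auto_derive.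
      repeat split; [lra | apply Rgt_not_eq, exp_pos | lra].
  - apply continuous_ext_loc with (PSeries e).
    + generalize (filter_and _ _ (open_gt (-1) x Hx) (open_lt 1 x ltac:(lra))).
      apply filter_imp; intros y Hy; unfold quot_ext.
      destruct (Rle_dec y 0); [reflexivity | symmetry; apply quot_series; lra].
    + apply (ex_derive_continuous (K := R_AbsRing) (V := R_NormedModule)).
      apply ex_derive_PSeries, e_radius, Rabs_def1; lra.
Qed.

Lemma ex_RInt_0_of_continuous (g : R -> R) b : (forall x, -1 < x -> continuous g x) ->
  -1 < b -> ex_RInt g 0 b.
Proof.
  intros Hg Hb; apply (ex_RInt_continuous (V := R_CompleteNormedModule)).
  intros z Hz; apply Hg; unfold Rmin, Rmax in Hz; destruct (Rle_dec 0 b); lra.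
Qed.

Let inner R0 := RInt quot_ext 0 R0.
Let outer R0 := R0 ^ (n - 2) * inner R0.

Lemma outer_cont x : -1 < x -> continuous outer x.
Proof.
  intros Hx; apply (ex_derive_continuous (K := R_AbsRing) (V := R_NormedModule)).
  unfold outer; auto_derive; eexists.
  apply is_derive_RInt with (a := 0); [|now apply quot_ext_cont].
  generalize (open_gt (-1) x Hx); apply filter_imp; intros y Hy.
  apply (RInt_correct (V := R_CompleteNormedModule)), ex_RInt_0_of_continuous;
    [apply quot_ext_cont | exact Hy].
Qed.

Definition Phi rho := - RInt outer 0 rho.

Lemma ex_derive_Phi_1 : ex_derive Phi 1.
Proof.
  unfold Phi; auto_derive; repeat split.
  - apply ex_RInt_0_of_continuous; [apply outer_cont | lra].
  - generalize (open_gt (-1) 1 ltac:(lra)); apply filter_imp; intros y Hy.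
    apply continuity_pt_filterlim, outer_cont, Hy.
Qed.

Lemma Phi_series rho : 0 < rho < 1 ->
  Phi rho = rho ^ (n - 1) * Series (fun k => rho ^ S k * K_term n (S k) t).
Proof.
  intros Hr.
  set (b k := e k / INR (S k)).
  set (d k := b k / INR (S (n - 1 + k))).
  assert (Hinner : forall R0, 0 < R0 < 1 -> inner R0 = R0 * PSeries b R0).
  { intros R0 HR0; unfold inner.
    rewrite (RInt_ext _ (fun y => y ^ 0 * PSeries e y)).
    2: { intros x Hx; rewrite Rmin_left, Rmax_right in Hx by lra; unfold quot_ext.
         destruct (Rle_dec x 0); [lra|]; rewrite quot_series by lra.
         now rewrite pow_O, Rmult_1_l. }
    rewrite RInt_pow_mul_PSeries by (apply e_radius, Rabs_def1; lra).
    now rewrite pow_1. }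
  assert (Houter : RInt outer 0 rho = rho ^ n * PSeries d rho).
  { rewrite (RInt_ext _ (fun y => y ^ (n - 1) * PSeries b y)).
    2: { intros x Hx; rewrite Rmin_left, Rmax_right in Hx by lra; unfold outer.
         rewrite Hinner by lra; replace (n - 1)%nat with (S (n - 2)) by lia; simpl; ring. }
    rewrite RInt_pow_mul_PSeries.
    - now replace (S (n - 1)) with n by lia.
    - unfold b; rewrite CV_radius_div_succ; apply e_radius, Rabs_def1; lra. }
  assert (HK : Series (fun k => rho ^ S k * K_term n (S k) t) = - rho * PSeries d rho).
  { unfold PSeries; rewrite <- Series_scal_l; apply Series_ext; intros k.
    unfold K_term, d, b, e, PS_decr_1, poisson_coef; fold lam.
    replace (S (n - 1 + k)) with (n + k)%nat by lia.
    rewrite plus_INR, !S_INR; pose proof (pos_INR k); pose proof INR_n_ge_2; pose proof lam_of_pos.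
    simpl pow; field; repeat split; lra. }
  unfold Phi; rewrite Houter, HK.
  replace n with (S (n - 1)) at 1 by lia; simpl pow; ring.
Qed.

Lemma Kfun_Phi : Kfun n t = Phi 1.
Proof.
  apply Kfun_abel, filterlim_ext_loc with (fun rho => Phi rho / rho ^ (n - 1)).
  - unfold at_left, within; generalize (open_gt 0 1 Rlt_0_1); apply filter_imp.
    intros y Hy Hy1.
    rewrite Phi_series by lra; field; apply pow_nonzero; lra.
  - apply (filterlim_filter_le_1 (F := locally 1)).
    { apply filter_le_within. }
    assert (Hc : continuous (fun rho => Phi rho / rho ^ (n - 1)) 1).
    { apply (ex_derive_continuous (K := R_AbsRing) (V := R_NormedModule)).
      auto_derive; rewrite pow1; repeat split; [apply ex_derive_Phi_1 | lra]. }
    unfold continuous in Hc; rewrite pow1, Rdiv_1_r in Hc; exact Hc.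
Qed.

Lemma poisson_integral_limit :
  filterlim
    (fun eps => - RInt (fun R0 => R0 ^ (n - 2) *
                   RInt (fun r => (Sigma n * poisson n r t - 1) / r) 0 R0)
                 0 (1 - eps))
    (at_right 0) (locally (Kfun n t)).
Proof.
  rewrite Kfun_Phi; apply filterlim_ext_loc with (fun eps => Phi (1 - eps)).
  - unfold at_right, within; generalize (open_lt 1 0 Rlt_0_1); apply filter_imp.
    intros eps Heps Heps0.
    unfold Phi; f_equal; apply RInt_ext; intros R0 HR0.
    rewrite Rmin_left, Rmax_right in HR0 by lra.
    unfold outer, inner; f_equal; apply RInt_ext; intros r Hr.
    rewrite Rmin_left, Rmax_right in Hr by lra.
    unfold quot_ext; destruct (Rle_dec r 0); [lra | reflexivity].
  - apply filterlim_comp with (G := locally 1).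
    + apply (filterlim_filter_le_1 (F := locally 0)).
      { apply filter_le_within. }
      assert (Hc : continuous (fun eps : R => 1 - eps) 0).
      { apply (ex_derive_continuous (K := R_AbsRing) (V := R_NormedModule)); auto_derive; auto. }
      unfold continuous in Hc; rewrite Rminus_0_r in Hc; exact Hc.
    + apply (ex_derive_continuous (K := R_AbsRing) (V := R_NormedModule)), ex_derive_Phi_1.
Qed.
End PoissonIntegral.

Theorem mainTheorem2 (n : nat) (hn : (2 <= n)%nat) (theta : R)
  (htheta : 0 < theta <= PI) :
  filterlim
    (fun eps => - RInt (fun R0 => R0 ^ (n - 2) *
                   RInt (fun r => (Sigma n * poisson n r (cos theta) - 1) / r) 0 R0)
                 0 (1 - eps))
    (at_right 0) (locally (Kfun n (cos theta))).
Proof.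
  apply poisson_integral_limit; [exact hn|]; split; [apply COS_bound|].
  rewrite <- cos_0; apply cos_decreasing_1; pose proof PI_RGT_0; lra.
Qed.
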